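(* Let $\alpha$ be a positive quadratic irrational and $A_1,A_2\in GL(2,\mathbb Z)$. If $\pi(A_1)$ and $\pi(A_2)$ restrict to isometric automorphisms of $\mathcal A_\alpha$, then $A_1A_2=A_2A_1$.
   Context: For $f\in C(\mathbb T^2)$ (with $\mathbb T$ the unit circle), the Fourier transform is $\hat f(m,n)=\int_{\mathbb T^2} f(e^{is},e^{it})e^{-i(ms+nt)}\,d\mu$, $\mu$ normalized Lebesgue measure. For a positive irrational $\alpha$, $\mathcal A_\alpha=\{f\in C(\mathbb T^2): \hat f(m,n)=0 \text{ whenever } m+\alpha n<0\}$, a uniform algebra with the sup norm on $\mathbb T^2$. For $A=\begin{bmatrix} a&b\\ c&d\end{bmatrix}\in GL(2,\mathbb Z)$, $\pi(A):C(\mathbb T^2)\to C(\mathbb T^2)$ is $\pi(A)(f)=f\circ\varphi$ with $\varphi(z,w)=(z^aw^b,z^cw^d)$. *)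

From Stdlib Require Import Reals ZArith ClassicalEpsilon.
Open Scope R_scope.

(* Riemann integral of f over [a,b] (value of RiemannInt for any integrability
   proof; arbitrary if f is not Riemann integrable -- only used on continuous
   integrands). *)
Definition RInt (f : R -> R) (a b : R) : R :=
  epsilon (inhabits 0%R)
    (fun r => exists pr : Riemann_integrable f a b, RiemannInt pr = r).

(* A complex-valued function on T^2, in the parametrisation
   (s,t) |-> f(e^{is}, e^{it}); the value is (real part, imaginary part). *)
Definition CFun := R -> R -> (R * R).

Definition cont2 (g : CFun) : Prop :=
  forall s t eps, 0 < eps -> exists delta, 0 < delta /\
    forall s' t', Rabs (s' - s) < delta -> Rabs (t' - t) < delta ->
      Rabs (fst (g s' t') - fst (g s t)) < eps /\
      Rabs (snd (g s' t') - snd (g s t)) < eps.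

(* 2pi-periodic in each variable, i.e. g comes from a function on T^2 *)
Definition periodic2 (g : CFun) : Prop :=
  forall s t, g (s + 2 * PI) t = g s t /\ g s (t + 2 * PI) = g s t.

Definition isCT2 (g : CFun) : Prop := cont2 g /\ periodic2 g.

(* Fourier coefficient hat f(m,n) = int f(e^{is},e^{it}) e^{-i(ms+nt)} dmu,
   with mu normalised Lebesgue measure: real and imaginary parts. *)
Definition fourier_re (g : CFun) (m n : Z) : R :=
  / (4 * PI ^ 2) *
  RInt (fun s => RInt (fun t =>
      fst (g s t) * cos (IZR m * s + IZR n * t)
    + snd (g s t) * sin (IZR m * s + IZR n * t)) 0 (2 * PI)) 0 (2 * PI).

Definition fourier_im (g : CFun) (m n : Z) : R :=
  / (4 * PI ^ 2) *
  RInt (fun s => RInt (fun t =>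
      snd (g s t) * cos (IZR m * s + IZR n * t)
    - fst (g s t) * sin (IZR m * s + IZR n * t)) 0 (2 * PI)) 0 (2 * PI).

Definition inA (alpha : R) (g : CFun) : Prop :=
  isCT2 g /\
  forall m n : Z, IZR m + alpha * IZR n < 0 ->
    fourier_re g m n = 0 /\ fourier_im g m n = 0.

Definition pos_quad_irrational (alpha : R) : Prop :=
  0 < alpha /\
  (forall p q : Z, q <> 0%Z -> alpha <> IZR p / IZR q) /\
  (exists a b c : Z, a <> 0%Z /\
     IZR a * alpha ^ 2 + IZR b * alpha + IZR c = 0).

Record mat2 := Mat2 { ma : Z; mb : Z; mc : Z; md : Z }.

Definition mat2_mul (A B : mat2) : mat2 :=
  Mat2 (ma A * ma B + mb A * mc B)%Z (ma A * mb B + mb A * md B)%Z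
       (mc A * ma B + md A * mc B)%Z (mc A * mb B + md A * md B)%Z.

Definition inGL2Z (A : mat2) : Prop :=
  (ma A * md A - mb A * mc A = 1)%Z \/ (ma A * md A - mb A * mc A = -1)%Z.

(* pi(A) f = f o phi, phi(z,w) = (z^a w^b, z^c w^d); in the parametrisation
   phi(e^{is},e^{it}) = (e^{i(as+bt)}, e^{i(cs+dt)}). *)
Definition piA (A : mat2) (g : CFun) : CFun :=
  fun s t => g (IZR (ma A) * s + IZR (mb A) * t) (IZR (mc A) * s + IZR (md A) * t).

(* pi(A) restricts to an (isometric) automorphism of A_alpha:
   it maps A_alpha into A_alpha and onto A_alpha.  (Injectivity, linearity,
   multiplicativity and sup-norm isometry hold automatically for pi(A).) *)
Definition restricts_to_aut (alpha : R) (A : mat2) : Prop :=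
  (forall g, inA alpha g -> inA alpha (piA A g)) /\
  (forall h, inA alpha h -> exists g, inA alpha g /\
       forall s t, piA A g s t = h s t).

(* The monomials z^p w^q with p + alpha q >= 0 lie in A_alpha, the monomials
   with p + alpha q < 0 do not (their own Fourier coefficient is 1), and pi(A)
   sends z^p w^q to the monomial with exponent (p, q) A.  Hence for an
   automorphism pi(A) the linear form (p, q) |-> p (a + alpha b) + q (c + alpha d)
   is nonnegative on the half-plane p + alpha q >= 0, which by the Archimedean
   property forces (1, alpha) to be an eigenvector of A.  Two integer matrices
   with a common eigenvector of irrational slope commute: comparing the
   coefficients of 1 and alpha in the eigenvector equations gives the entries
   of the commutator.  Only the irrationality of alpha and the inclusion
   pi(A)(A_alpha) in A_alpha are needed. *)

From Pilot Require Import Defs.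
From Stdlib Require Import Reals ZArith ClassicalEpsilon Lra Lia FunctionalExtensionality.
From Coquelicot Require Import Coquelicot.
Open Scope R_scope.

Lemma RInt_of_is_RInt f a b v : is_RInt f a b v -> Defs.RInt f a b = v.
Proof.
  intro Hv.
  assert (Hex : exists pr : Riemann_integrable f a b, RiemannInt pr = v).
  { exists (ex_RInt_Reals_0 f a b (ex_intro _ v Hv)).
    rewrite <- RInt_Reals. exact (is_RInt_unique f a b v Hv). }
  unfold Defs.RInt.
  destruct (epsilon_spec (inhabits 0)
              (fun r => exists pr : Riemann_integrable f a b, RiemannInt pr = r)
              (ex_intro _ v Hex)) as [pr' <-].
  destruct Hex as [pr <-]. apply RiemannInt_P5.
Qed.

Lemma periodic_Z (f : R -> R) T :
  (forall x, f (x + T) = f x) -> forall (k : Z) x, f (x + IZR k * T) = f x.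
Proof.
  intros HT k. induction k as [|k IHk|k IHk] using Z.peano_ind; intro x.
  - now rewrite Rmult_0_l, Rplus_0_r.
  - rewrite succ_IZR, <- (HT x), <- (IHk (x + T)). f_equal. ring.
  - rewrite <- (IHk x), <- (HT (x + IZR (Z.pred k) * T)).
    unfold Z.pred; rewrite plus_IZR. f_equal. ring.
Qed.

Lemma cos_period_Z (k : Z) x : cos (x + IZR k * (2 * PI)) = cos x.
Proof.
  apply periodic_Z. intro y.
  rewrite <- (cos_period y 1). f_equal. simpl. ring.
Qed.

Lemma sin_period_Z (k : Z) x : sin (x + IZR k * (2 * PI)) = sin x.
Proof.
  apply periodic_Z. intro y.
  rewrite <- (sin_period y 1). f_equal. simpl. ring.
Qed.

Definition kron (l : Z) : R := if Z.eq_dec l 0 then 1 else 0.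

Lemma is_RInt_cos_affine c (l : Z) :
  is_RInt (fun t => cos (c + IZR l * t)) 0 (2 * PI) (2 * PI * kron l * cos c).
Proof.
  unfold kron; destruct (Z.eq_dec l 0) as [->|Hl].
  - replace (2 * PI * 1 * cos c) with (scal (2 * PI - 0) (cos c))
      by (rewrite Rminus_0_r; unfold scal; simpl; unfold mult; simpl; ring).
    eapply is_RInt_ext; [|apply (is_RInt_const 0 (2 * PI) (cos c))].
    intros x _. simpl. f_equal. ring.
  - assert (Hl' : IZR l <> 0) by now apply not_0_IZR.
    replace (2 * PI * 0 * cos c)
      with (minus (sin (c + IZR l * (2 * PI)) / IZR l) (sin (c + IZR l * 0) / IZR l))
      by (rewrite sin_period_Z, Rmult_0_r, Rplus_0_r;
          unfold minus, plus, opp; simpl; ring).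
    apply (is_RInt_derive (fun t => sin (c + IZR l * t) / IZR l)).
    + intros x _. auto_derive; [exact I|]. now field.
    + intros x _. apply continuity_pt_filterlim.
      apply (continuity_pt_comp (fun t => c + IZR l * t) cos); [reg|apply continuity_cos].
Qed.

Lemma is_RInt_sin_affine c (l : Z) :
  is_RInt (fun t => sin (c + IZR l * t)) 0 (2 * PI) (2 * PI * kron l * sin c).
Proof.
  assert (cos_sub_PI2 : forall y, cos (y - PI / 2) = sin y).
  { intro y. rewrite <- cos_shift, <- cos_neg. f_equal. ring. }
  rewrite <- cos_sub_PI2.
  eapply is_RInt_ext; [|apply (is_RInt_cos_affine (c - PI / 2) l)].
  intros t _. rewrite <- cos_sub_PI2. f_equal. ring.
Qed.

Section DoubleIntegral.

Variable f : R -> R.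
Hypothesis is_RInt_f_affine : forall c (l : Z),
  is_RInt (fun t => f (c + IZR l * t)) 0 (2 * PI) (2 * PI * kron l * f c).

Lemma RInt2_affine c (k l : Z) :
  Defs.RInt (fun s => Defs.RInt (fun t => f (c + IZR k * s + IZR l * t))
                        0 (2 * PI)) 0 (2 * PI)
  = 4 * PI ^ 2 * kron k * kron l * f c.
Proof.
  assert (inner : (fun s => Defs.RInt (fun t => f (c + IZR k * s + IZR l * t)) 0 (2 * PI))
                = (fun s => scal (2 * PI * kron l) (f (c + IZR k * s)))).
  { apply functional_extensionality; intro s.
    exact (RInt_of_is_RInt _ _ _ _ (is_RInt_f_affine (c + IZR k * s) l)). }
  rewrite inner. apply RInt_of_is_RInt.
  replace (4 * PI ^ 2 * kron k * kron l * f c)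
    with (scal (2 * PI * kron l) (2 * PI * kron k * f c))
    by (unfold scal; simpl; unfold mult; simpl; ring).
  exact (is_RInt_scal _ 0 (2 * PI) (2 * PI * kron l) _ (is_RInt_f_affine c k)).
Qed.

End DoubleIntegral.

Lemma RInt2_ext (g h : R -> R -> R) :
  (forall s t, g s t = h s t) ->
  Defs.RInt (fun s => Defs.RInt (g s) 0 (2 * PI)) 0 (2 * PI)
  = Defs.RInt (fun s => Defs.RInt (h s) 0 (2 * PI)) 0 (2 * PI).
Proof.
  intro Hgh. f_equal. apply functional_extensionality; intro s. f_equal.
  apply functional_extensionality; intro t. apply Hgh.
Qed.

Definition monomial (p q : Z) : CFun :=
  fun s t => (cos (IZR p * s + IZR q * t), sin (IZR p * s + IZR q * t)).

Lemma fourier_monomial p q m n :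
  fourier_re (monomial p q) m n = kron (p - m) * kron (q - n) /\
  fourier_im (monomial p q) m n = 0.
Proof.
  assert (HPI : PI <> 0) by (generalize PI_RGT_0; lra).
  split.
  - unfold fourier_re.
    rewrite (RInt2_ext _ (fun s t => cos (0 + IZR (p - m) * s + IZR (q - n) * t))).
    + rewrite (RInt2_affine cos is_RInt_cos_affine), cos_0. now field.
    + intros s t. unfold monomial; simpl. rewrite <- cos_minus, !minus_IZR.
      f_equal. ring.
  - unfold fourier_im.
    rewrite (RInt2_ext _ (fun s t => sin (0 + IZR (p - m) * s + IZR (q - n) * t))).
    + rewrite (RInt2_affine sin is_RInt_sin_affine), sin_0. ring.
    + intros s t. unfold monomial; simpl. rewrite <- sin_minus, !minus_IZR.
      f_equal. ring.
Qed.

Lemma Rabs_sub_le_of_derive_bound (f f' : R -> R) x y :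
  (forall c, derivable_pt_lim f c (f' c)) -> (forall c, Rabs (f' c) <= 1) ->
  Rabs (f x - f y) <= Rabs (x - y).
Proof.
  intros Hf' Hbound.
  destruct (MVT_abs f f' y x) as [c [-> _]]; [intros c _; apply Hf'|].
  pose proof (Hbound c). pose proof (Rabs_pos (x - y)). nra.
Qed.

Lemma cont2_monomial p q : cont2 (monomial p q).
Proof.
  intros s t eps Heps.
  set (K := Rabs (IZR p) + Rabs (IZR q) + 1).
  assert (HK : 0 < K) by (unfold K; generalize (Rabs_pos (IZR p)) (Rabs_pos (IZR q)); lra).
  exists (eps / K). split; [apply Rdiv_lt_0_compat; lra|].
  intros s' t' Hs Ht.
  assert (Hphase : Rabs ((IZR p * s' + IZR q * t') - (IZR p * s + IZR q * t)) < eps).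
  { replace ((IZR p * s' + IZR q * t') - (IZR p * s + IZR q * t))
      with (IZR p * (s' - s) + IZR q * (t' - t)) by ring.
    eapply Rle_lt_trans; [apply Rabs_triang|]. rewrite !Rabs_mult.
    assert (Hp : Rabs (IZR p) * Rabs (s' - s) <= Rabs (IZR p) * (eps / K))
      by (apply Rmult_le_compat_l; [apply Rabs_pos|lra]).
    assert (Hq : Rabs (IZR q) * Rabs (t' - t) <= Rabs (IZR q) * (eps / K))
      by (apply Rmult_le_compat_l; [apply Rabs_pos|lra]).
    assert (Hsum : (Rabs (IZR p) + Rabs (IZR q)) * (eps / K) < K * (eps / K))
      by (apply Rmult_lt_compat_r; [apply Rdiv_lt_0_compat|unfold K]; lra).
    replace (K * (eps / K)) with eps in Hsum by (field; lra).
    lra. }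
  unfold monomial; simpl. split; eapply Rle_lt_trans; try exact Hphase.
  - apply (Rabs_sub_le_of_derive_bound cos (fun c => - sin c)).
    + apply derivable_pt_lim_cos.
    + intro c. rewrite Rabs_Ropp. apply Rabs_le, SIN_bound.
  - apply (Rabs_sub_le_of_derive_bound sin cos).
    + apply derivable_pt_lim_sin.
    + intro c. apply Rabs_le, COS_bound.
Qed.

Lemma periodic2_monomial p q : periodic2 (monomial p q).
Proof.
  intros s t. unfold monomial.
  replace (IZR p * (s + 2 * PI) + IZR q * t)
    with (IZR p * s + IZR q * t + IZR p * (2 * PI)) by ring.
  replace (IZR p * s + IZR q * (t + 2 * PI))
    with (IZR p * s + IZR q * t + IZR q * (2 * PI)) by ring.
  now rewrite !cos_period_Z, !sin_period_Z.
Qed.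

Lemma monomial_inA alpha p q : 0 <= IZR p + alpha * IZR q -> inA alpha (monomial p q).
Proof.
  intro Hpq. split; [split; [apply cont2_monomial|apply periodic2_monomial]|].
  intros m n Hmn. destruct (fourier_monomial p q m n) as [-> ->].
  split; [|reflexivity].
  unfold kron. destruct (Z.eq_dec (p - m) 0); [|ring].
  destruct (Z.eq_dec (q - n) 0); [|ring].
  replace m with p in Hmn by lia. replace n with q in Hmn by lia. lra.
Qed.

Lemma not_inA_monomial alpha m n :
  IZR m + alpha * IZR n < 0 -> ~ inA alpha (monomial m n).
Proof.
  intros Hmn [_ Hcoef]. destruct (Hcoef m n Hmn) as [Hre _].
  destruct (fourier_monomial m n m n) as [Hself _].
  rewrite !Z.sub_diag in Hself. unfold kron in Hself. simpl in Hself. lra.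
Qed.

Lemma piA_monomial A p q :
  piA A (monomial p q)
  = monomial (p * ma A + q * mc A) (p * mb A + q * md A).
Proof.
  apply functional_extensionality; intro s; apply functional_extensionality; intro t.
  unfold piA, monomial. rewrite !plus_IZR, !mult_IZR.
  f_equal; f_equal; ring.
Qed.

Lemma exists_Z_mul_lt w M : w <> 0 -> exists q : Z, w * IZR q < M.
Proof.
  intro Hw.
  assert (Hw' : 0 < Rabs w) by now apply Rabs_pos_lt.
  destruct (archimed (Rabs M / Rabs w)) as [HN _].
  set (N := up (Rabs M / Rabs w)) in HN.
  assert (HwN : Rabs M < Rabs w * IZR N).
  { apply (Rmult_lt_compat_l (Rabs w)) in HN; [|exact Hw'].
    replace (Rabs w * (Rabs M / Rabs w)) with (Rabs M) in HN by (field; lra). lra. }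
  pose proof (Rle_abs (- M)) as HM. rewrite Rabs_Ropp in HM.
  destruct (Rlt_dec 0 w).
  - exists (- N)%Z. rewrite opp_IZR. rewrite (Rabs_right w) in HwN by lra. nra.
  - exists N. rewrite (Rabs_left w) in HwN by lra. nra.
Qed.

Lemma nonneg_on_halfplane_proportional alpha u v :
  (forall p q : Z, 0 <= IZR p + alpha * IZR q -> 0 <= IZR p * u + IZR q * v) ->
  v = alpha * u.
Proof.
  intro Hform.
  destruct (Req_dec (v - alpha * u) 0) as [|Hw]; [lra|exfalso].
  destruct (exists_Z_mul_lt _ (- Rabs u) Hw) as [q Hq].
  destruct (archimed (- (alpha * IZR q))) as [Hp1 Hp2].
  set (p := up (- (alpha * IZR q))) in *.
  specialize (Hform p q ltac:(lra)).
  (* with L := p + alpha q in [0, 1]:  p u + q v = u L + (v - alpha u) q *)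
  assert (HuL : u * (IZR p + alpha * IZR q) <= Rabs u).
  { destruct (Rle_or_lt 0 u).
    - rewrite Rabs_right by lra. nra.
    - rewrite Rabs_left by lra. nra. }
  nra.
Qed.

Definition eigvec_1_alpha (alpha : R) (A : mat2) : Prop :=
  IZR (mc A) + alpha * IZR (md A) = alpha * (IZR (ma A) + alpha * IZR (mb A)).

Lemma eigvec_1_alpha_of_invariant alpha A :
  (forall g, inA alpha g -> inA alpha (piA A g)) -> eigvec_1_alpha alpha A.
Proof.
  intro HA. apply nonneg_on_halfplane_proportional. intros p q Hpq.
  apply Rnot_lt_le; intro Hneg.
  apply (not_inA_monomial alpha (p * ma A + q * mc A) (p * mb A + q * md A)).
  - rewrite !plus_IZR, !mult_IZR. lra.
  - rewrite <- piA_monomial. now apply HA, monomial_inA.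
Qed.

Definition irrational (x : R) : Prop :=
  forall p q : Z, q <> 0%Z -> x <> IZR p / IZR q.

Lemma irrational_lin_indep alpha P Q :
  irrational alpha -> IZR P * alpha + IZR Q = 0 -> P = 0%Z /\ Q = 0%Z.
Proof.
  intros Hirr H.
  destruct (Z.eq_dec P 0) as [->|HP].
  - split; [reflexivity|]. apply eq_IZR. lra.
  - exfalso. apply (Hirr (- Q)%Z P HP).
    rewrite opp_IZR. apply not_0_IZR in HP. field_simplify_eq; [lra|exact HP].
Qed.

Lemma mat2_mul_comm_of_eigvec alpha A1 A2 :
  irrational alpha -> alpha <> 0 ->
  eigvec_1_alpha alpha A1 -> eigvec_1_alpha alpha A2 ->
  mat2_mul A1 A2 = mat2_mul A2 A1.
Proof.
  intros Hirr Ha E1 E2.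
  destruct A1 as [a1 b1 c1 d1], A2 as [a2 b2 c2 d2]; unfold eigvec_1_alpha in *; simpl in *.
  destruct (irrational_lin_indep alpha (b2 * (a1 - d1) - b1 * (a2 - d2)) (b1 * c2 - b2 * c1) Hirr)
    as [Hb Hbc].
  { rewrite !minus_IZR, !mult_IZR, !minus_IZR.
    apply (f_equal (Rmult (IZR b2))) in E1. apply (f_equal (Rmult (IZR b1))) in E2. lra. }
  destruct (irrational_lin_indep alpha (c2 * b1 - c1 * b2) (c2 * (a1 - d1) - c1 * (a2 - d2)) Hirr)
    as [_ Hc].
  { rewrite !minus_IZR, !mult_IZR, !minus_IZR.
    apply (f_equal (Rmult (IZR c2))) in E1. apply (f_equal (Rmult (IZR c1))) in E2.
    apply (Rmult_eq_reg_l alpha); lra. }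
  unfold mat2_mul; simpl. f_equal; lia.
Qed.

Theorem mainTheorem10 (alpha : R) (A1 A2 : mat2) :
  pos_quad_irrational alpha ->
  inGL2Z A1 -> inGL2Z A2 ->
  restricts_to_aut alpha A1 -> restricts_to_aut alpha A2 ->
  mat2_mul A1 A2 = mat2_mul A2 A1.
Proof.
  intros [Hpos [Hirr _]] _ _ [H1 _] [H2 _].
  apply (mat2_mul_comm_of_eigvec alpha); [exact Hirr|lra| |];
    now apply eigvec_1_alpha_of_invariant.
Qed.
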